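(* Let $G=(V_G,E_G)$ and $H=(V_H,E_H)$ be two vertex-disjoint directed co-graphs. Then $\mathrm{pw}(\mathrm{un}(G\oslash H))>\mathrm{dpw}(G\oslash H)$.
   Context: Digraphs are finite, without loops or multiple arcs. Operations on vertex-disjoint digraphs $G_1,\ldots,G_k$: disjoint union $\oplus$ (union of vertex and arc sets); series composition $\otimes$ (disjoint union plus all arcs in both directions between vertices of different $G_i$); order composition $G_1\oslash\cdots\oslash G_k$ (disjoint union plus all arcs from vertices of $G_i$ to vertices of $G_j$ for $i<j$). Directed co-graphs: every single-vertex digraph, and closure under these three operations. $\mathrm{un}(G)$ is the underlying undirected graph of $G$ (edge $\{u,v\}$ iff $(u,v)$ or $(v,u)$ is an arc), and $\mathrm{pw}$ denotes the usual (undirected) path-width. A directed path-decomposition of $G=(V,E)$ is a sequence $(X_1,\ldots,X_r)$ of subsets of $V$ with $\bigcup X_i=V$, for each arc $(u,v)$ some $i\le j$ with $u\in X_i,v\in X_j$, and for each vertex the bags containing it having consecutive indices; width $\max|X_i|-1$; $\mathrm{dpw}(G)$ is the minimum width. *)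

From Stdlib Require Import ClassicalEpsilon.
From mathcomp Require Import all_boot all_order.
Set Implicit Arguments. Unset Strict Implicit. Unset Printing Implicit Defensive.

(* A digraph is given as a vertex set V : {set T} inside a finite universe T,
   together with an arc relation E : rel T; its arcs are the pairs (u,v) with
   u, v in V and E u v. *)

Section Defs.
Variable T : finType.

(* Directed co-graphs (on vertex set A, arcs = E restricted to A), built with
   binary versions of the three operations (k-ary ones are iterated binary ones). *)
Inductive dcograph (E : rel T) : {set T} -> Prop :=
| dco_single x : ~~ E x x -> dcograph E [set x]
| dco_union (A B : {set T}) : [disjoint A & B] -> dcograph E A -> dcograph E B ->
    (forall x y, x \in A -> y \in B -> ~~ E x y && ~~ E y x) ->
    dcograph E (A :|: B)
| dco_series (A B : {set T}) : [disjoint A & B] -> dcograph E A -> dcograph E B ->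
    (forall x y, x \in A -> y \in B -> E x y && E y x) ->
    dcograph E (A :|: B)
| dco_order (A B : {set T}) : [disjoint A & B] -> dcograph E A -> dcograph E B ->
    (forall x y, x \in A -> y \in B -> E x y && ~~ E y x) ->
    dcograph E (A :|: B).

Definition ocomp (E : rel T) (VG VH : {set T}) : rel T :=
  fun x y => [|| [&& x \in VG, y \in VG & E x y],
                 [&& x \in VH, y \in VH & E x y] |
                 (x \in VG) && (y \in VH)].

Definition un (E : rel T) : rel T := fun u v => E u v || E v u.

Definition bag (bags : seq {set T}) (i : nat) : {set T} := nth set0 bags i.

Definition consecutive (bags : seq {set T}) : Prop :=
  forall v i j k, i <= j -> j <= k -> k < size bags ->
    v \in bag bags i -> v \in bag bags k -> v \in bag bags j.

Definition width (bags : seq {set T}) : nat := (\max_(X <- bags) #|X|).-1.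

Definition is_pd (e : rel T) (V : {set T}) (bags : seq {set T}) : Prop :=
  [/\ forall i, i < size bags -> bag bags i \subset V,
      forall v, v \in V -> exists2 i, i < size bags & v \in bag bags i,
      forall u v, u \in V -> v \in V -> e u v ->
        exists2 i, i < size bags & (u \in bag bags i) && (v \in bag bags i)
    & consecutive bags].

Definition is_dpd (E : rel T) (V : {set T}) (bags : seq {set T}) : Prop :=
  [/\ forall i, i < size bags -> bag bags i \subset V,
      forall v, v \in V -> exists2 i, i < size bags & v \in bag bags i,
      forall u v, u \in V -> v \in V -> E u v ->
        exists i j, [/\ i <= j, j < size bags, u \in bag bags i & v \in bag bags j]
    & consecutive bags].

Lemma triv_consecutive (V : {set T}) : consecutive [:: V].
Proof. by move=> v [|i] [|j] [|k] //= _ _ _ ->. Qed.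

Lemma pd_exists (e : rel T) (V : {set T}) :
  exists k, exists bags, is_pd e V bags /\ width bags = k.
Proof.
exists (width [:: V]), [:: V]; split => //; split.
- by case.
- by move=> v vV; exists 0.
- by move=> u v uV vV _; exists 0 => //=; rewrite /bag /= uV vV.
- exact: triv_consecutive.
Qed.

Lemma dpd_exists (E : rel T) (V : {set T}) :
  exists k, exists bags, is_dpd E V bags /\ width bags = k.
Proof.
exists (width [:: V]), [:: V]; split => //; split.
- by case.
- by move=> v vV; exists 0.
- by move=> u v uV vV _; exists 0, 0.
- exact: triv_consecutive.
Qed.

Definition pbool (P : Prop) : bool := if excluded_middle_informative P then true else false.

Lemma pboolP (P : Prop) : pbool P <-> P.
Proof. by rewrite /pbool; case: excluded_middle_informative. Qed.

Lemma pd_exists' (e : rel T) (V : {set T}) :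
  exists k, pbool (exists bags, is_pd e V bags /\ width bags = k).
Proof. by have [k H] := pd_exists e V; exists k; apply/pboolP. Qed.

Lemma dpd_exists' (E : rel T) (V : {set T}) :
  exists k, pbool (exists bags, is_dpd E V bags /\ width bags = k).
Proof. by have [k H] := dpd_exists E V; exists k; apply/pboolP. Qed.

Definition pw (e : rel T) (V : {set T}) : nat := ex_minn (pd_exists' e V).
Definition dpw (E : rel T) (V : {set T}) : nat := ex_minn (dpd_exists' E V).

End Defs.

From mathcomp Require Import all_boot zify.
Set Implicit Arguments. Unset Strict Implicit. Unset Printing Implicit Defensive.

(* Fix an optimal path-decomposition P of un(G ⊘ H) and vertices g of G and
   h of H.  Since h is adjacent to all of G, for every bag X the bag nearest
   to X among those containing h contains X ∩ V_G; so the bags containing h,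
   cut down to V_G, still form a path-decomposition of G, and symmetrically
   for H with g.  All arcs between G and H go from G to H, hence the G-part
   followed by the H-part is a directed path-decomposition of G ⊘ H, and each
   of its bags has lost h or g, so its width is below that of P. *)


Section PathDecompositions.
Variable T : finType.
Implicit Types (s P D : seq {set T}) (A B V X Y : {set T}).

Lemma consecutive_between s v i j k : consecutive s ->
  i < size s -> k < size s -> minn i k <= j <= maxn i k ->
  v \in bag s i -> v \in bag s k -> v \in bag s j.
Proof.
move=> cs; wlog ik : i k / i <= k => [wlog_ik|].
  case/orP: (leq_total i k) => [ik|ki]; first exact: wlog_ik.
  by rewrite minnC maxnC => i_lt k_lt j_btw vi vk; apply: (wlog_ik k i).
by rewrite (minn_idPl ik) (maxn_idPr ik) => _ k_lt /andP[ij jk]; apply: cs.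
Qed.

Lemma consecutive_map_bag s (idx : seq nat) :
  sorted leq idx -> all [pred i | i < size s] idx -> consecutive s ->
  consecutive (map (bag s) idx).
Proof.
move=> idx_sorted /allP idx_lt cs v i j k ij jk; rewrite size_map => k_lt.
have j_lt := leq_ltn_trans jk k_lt; have i_lt := leq_ltn_trans ij j_lt.
have mono := sorted_leq_nth leq_trans leqnn 0 idx_sorted.
rewrite /bag !(nth_map 0) //; apply: cs; rewrite ?mono ?inE //.
exact/idx_lt/mem_nth.
Qed.

Lemma consecutive_filter (p : pred {set T}) s :
  consecutive s -> consecutive (filter p s).
Proof.
have -> : filter p s = map (bag s) [seq i <- iota 0 (size s) | p (bag s i)].
  by rewrite -filter_map -{1}(mkseq_nth set0 s).
apply: consecutive_map_bag; first exact/sorted_filter/iota_sorted/leq_trans.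
by apply/allP => i; rewrite mem_filter mem_iota => /and3P[].
Qed.

Lemma consecutive_map_setI A s :
  consecutive s -> consecutive [seq X :&: A | X <- s].
Proof.
move=> cs v i j k ij jk; rewrite size_map => k_lt.
have j_lt := leq_ltn_trans jk k_lt; have i_lt := leq_ltn_trans ij j_lt.
rewrite /bag !(nth_map set0) // !inE => /andP[vi ->] /andP[vk _].
by rewrite (cs v i j k).
Qed.

Lemma pd_nearest_bag (e : rel T) V P b j : is_pd e V P -> b \in V -> j < size P ->
  exists2 k, k < size P & (b \in bag P k) && ([set a in bag P j | e a b] \subset bag P k).
Proof.
move=> [P_sub P_cover P_edge P_consec] bV j_lt.
have [k0 k0_lt bk0] := P_cover b bV.
pose dist (i : nat) := (i - j) + (j - i).
case: (@arg_minnP _ (Ordinal k0_lt) (fun k => b \in bag P k) dist) => //.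
move=> [k k_lt] /= bk k_nearest; exists k => //; rewrite bk /=.
apply/subsetP => a; rewrite inE => /andP[aj eab].
have [i i_lt /andP[ai bi]] := P_edge a b (subsetP (P_sub j j_lt) a aj) bV eab.
have dist_ki : dist k <= dist i := k_nearest (Ordinal i_lt) bi.
(* b lies in bags i and k but not in bag j, so j is not between k and i;
   as k is nearest to j, it is between j and i. *)
have k_btw : minn j i <= k <= maxn j i.
  case bj: (b \in bag P j).
    by have := k_nearest (Ordinal j_lt) bj; rewrite /dist /=; lia.
  suff : ~~ (minn k i <= j <= maxn k i) by move: dist_ki; rewrite /dist; lia.
  by apply: contraFN bj => j_btw; apply: (consecutive_between P_consec k_lt i_lt).
exact: (consecutive_between P_consec j_lt i_lt).
Qed.

Definition trace_through P A b := [seq X :&: A | X <- P & b \in X].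

Lemma trace_through_cover (e : rel T) V P A b j : is_pd e V P -> b \in V ->
  {in A, forall a, e a b} -> j < size P ->
  exists2 X, X \in trace_through P A b & bag P j :&: A \subset X.
Proof.
move=> P_pd bV Ab j_lt; have [k k_lt /andP[bk sub_k]] := pd_nearest_bag P_pd bV j_lt.
exists (bag P k :&: A); first by apply: map_f; rewrite mem_filter bk mem_nth.
apply/subsetP => a; rewrite !inE => /andP[aj aA]; rewrite aA andbT.
by apply: (subsetP sub_k); rewrite inE aj Ab.
Qed.

Lemma pd_trace_through (e : rel T) V P A b : is_pd e V P -> A \subset V ->
  b \in V -> {in A, forall a, e a b} -> is_pd e A (trace_through P A b).
Proof.
move=> P_pd AV bV Ab; have [_ P_cover P_edge P_consec] := P_pd.
have common_bag u v j : j < size P -> u \in A -> v \in A ->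
    u \in bag P j -> v \in bag P j -> exists2 t, t < size (trace_through P A b) &
    (u \in bag (trace_through P A b) t) && (v \in bag (trace_through P A b) t).
  move=> j_lt uA vA uj vj.
  have [X /(nthP set0)[t t_lt X_t] /subsetP sub_X] := trace_through_cover P_pd bV Ab j_lt.
  by exists t; rewrite // /bag X_t !sub_X // !inE ?uj ?vj.
split.
- move=> t t_lt; rewrite /bag.
  by have /mapP[X _ ->] := mem_nth set0 t_lt; apply: subsetIr.
- move=> v vA; have [j j_lt vj] := P_cover v (subsetP AV v vA).
  by have [t t_lt /andP[vt _]] := common_bag v v j j_lt vA vA vj vj; exists t.
- move=> u v uA vA euv.
  have [j j_lt /andP[uj vj]] := P_edge u v (subsetP AV u uA) (subsetP AV v vA) euv.
  exact: common_bag j_lt uA vA uj vj.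
- exact/consecutive_map_setI/consecutive_filter.
Qed.

Lemma trace_through_card P A b X : b \notin A -> X \in trace_through P A b ->
  exists2 Y, Y \in P & #|X| < #|Y|.
Proof.
move=> bNA /mapP[Y]; rewrite mem_filter => /andP[bY YP] ->; exists Y => //.
apply: proper_card; rewrite properE subsetIl; apply/subsetPn.
by exists b; rewrite // inE (negbTE bNA) andbF.
Qed.

Lemma pd_dpd (F : rel T) V P : is_pd (un F) V P -> is_dpd F V P.
Proof.
move=> [P_sub P_cover P_edge P_consec]; split => // u v uV vV Fuv.
have euv : un F u v by rewrite /un Fuv.
by have [i i_lt /andP[ui vi]] := P_edge u v uV vV euv; exists i, i.
Qed.

Lemma bag_cat_l s1 s2 i : i < size s1 -> bag (s1 ++ s2) i = bag s1 i.
Proof. by move=> i_lt; rewrite /bag nth_cat i_lt. Qed.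

Lemma bag_cat_r s1 s2 i : bag (s1 ++ s2) (size s1 + i) = bag s2 i.
Proof. by rewrite /bag nth_cat ltnNge leq_addr addKn. Qed.

Lemma consecutive_cat s1 s2 : consecutive s1 -> consecutive s2 ->
  {in s1 & s2, forall X Y, [disjoint X & Y]} -> consecutive (s1 ++ s2).
Proof.
move=> s1_consec s2_consec s12_disj v i j k ij jk; rewrite size_cat => k_lt.
case: (ltnP k (size s1)) => [k_lt1|/subnKC k_eq].
  have j_lt1 := leq_ltn_trans jk k_lt1; have i_lt1 := leq_ltn_trans ij j_lt1.
  by rewrite !bag_cat_l //; apply: s1_consec.
case: (ltnP i (size s1)) => [i_lt1|/subnKC i_eq].
  rewrite bag_cat_l // -k_eq bag_cat_r => vi vk; exfalso.
  have k_lt2 : k - size s1 < size s2 by lia.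
  have := s12_disj _ _ (mem_nth set0 i_lt1) (mem_nth set0 k_lt2).
  by move/disjointFr/(_ vi); rewrite [_ \in _]vk.
have j_eq : size s1 + (j - size s1) = j by lia.
rewrite -i_eq -j_eq -k_eq !bag_cat_r; apply: s2_consec; lia.
Qed.

Lemma dpd_cat (F : rel T) A B DA DB : [disjoint A & B] ->
  {in B & A, forall u v, ~~ F u v} -> is_dpd F A DA -> is_dpd F B DB ->
  is_dpd F (A :|: B) (DA ++ DB).
Proof.
move=> dAB noBA [A_sub A_cover A_arc A_consec] [B_sub B_cover B_arc B_consec].
split.
- move=> t; rewrite size_cat; case: (ltnP t (size DA)) => [t_lt _|/subnKC <-].
    by rewrite bag_cat_l // (subset_trans (A_sub t t_lt)) ?subsetUl.
  by rewrite ltn_add2l bag_cat_r => t_lt; rewrite (subset_trans (B_sub _ t_lt)) ?subsetUr.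
- move=> v; rewrite inE => /orP[vA|vB].
    have [t t_lt vt] := A_cover v vA.
    by exists t; rewrite ?bag_cat_l // size_cat ltn_addr.
  have [t t_lt vt] := B_cover v vB.
  by exists (size DA + t); rewrite ?bag_cat_r // size_cat ltn_add2l.
- move=> u v; rewrite !inE => /orP[uA|uB] /orP[vA|vB] Fuv.
  + have [i [j [ij j_lt ui vj]]] := A_arc u v uA vA Fuv.
    by exists i, j; rewrite size_cat !bag_cat_l ?(leq_ltn_trans ij) ?ltn_addr.
  + have [i i_lt ui] := A_cover u uA; have [j j_lt vj] := B_cover v vB.
    exists i, (size DA + j); rewrite bag_cat_l // bag_cat_r size_cat ltn_add2l.
    by split=> //; apply: leq_trans (ltnW i_lt) (leq_addr _ _).
  + by move: Fuv; rewrite (negbTE (noBA u v uB vA)).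
  + have [i [j [ij j_lt ui vj]]] := B_arc u v uB vB Fuv.
    by exists (size DA + i), (size DA + j); rewrite !bag_cat_r size_cat leq_add2l ltn_add2l.
- apply: consecutive_cat => // X Y /(nthP set0)[i i_lt <-] /(nthP set0)[j j_lt <-].
  exact: disjointWl (A_sub i i_lt) (disjointWr (B_sub j j_lt) dAB).
Qed.

Lemma width_lt D P i x : i < size D -> x \in bag D i ->
  {in D, forall X, exists2 Y, Y \in P & #|X| < #|Y|} -> width D < width P.
Proof.
move=> i_lt xi D_smaller; rewrite /width.
have max_lt : \max_(X <- D) #|X| <= (\max_(Y <- P) #|Y|).-1.
  apply/bigmax_leqP_seq => X XD _; have [Y YP XY] := D_smaller X XD.
  have Y_le : #|Y| <= \max_(Z <- P) #|Z| := leq_bigmax_seq _ YP isT.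
  lia.
have max_gt0 : 0 < \max_(X <- D) #|X|.
  apply: leq_trans (leq_bigmax_seq _ (mem_nth set0 i_lt) isT).
  by rewrite card_gt0; apply/set0Pn; exists x.
lia.
Qed.

Lemma dpw_le_width (F : rel T) V D : is_dpd F V D -> dpw F V <= width D.
Proof.
by rewrite /dpw => D_dpd; case: ex_minnP => m _; apply; apply/pboolP; exists D.
Qed.

Lemma pw_attained (e : rel T) V : exists2 P, is_pd e V P & width P = pw e V.
Proof. by rewrite /pw; case: ex_minnP => p /pboolP[P []]; exists P. Qed.
End PathDecompositions.

Lemma dcograph_nonempty (T : finType) (E : rel T) A : dcograph E A -> exists x, x \in A.
Proof.
by elim=> [x _|A1 B1 _ _ [x xA1] *|A1 B1 _ _ [x xA1] *|A1 B1 _ _ [x xA1] *];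
  exists x; rewrite !inE ?xA1.
Qed.

Theorem lemma3p9 (T : finType) (E : rel T) (VG VH : {set T}) :
  [disjoint VG & VH] -> dcograph E VG -> dcograph E VH ->
  dpw (ocomp E VG VH) (VG :|: VH) < pw (un (ocomp E VG VH)) (VG :|: VH).
Proof.
move=> dGH /dcograph_nonempty[g gG] /dcograph_nonempty[h hH].
set F := ocomp E VG VH; set V := VG :|: VH.
have F_GH : {in VG & VH, forall x y, F x y} by move=> x y xG yH; rewrite /F /ocomp xG yH !orbT.
have noF_HG : {in VH & VG, forall x y, ~~ F x y}.
  by move=> x y xH yG; rewrite /F /ocomp (disjointFl dGH xH) (disjointFr dGH yG) !andbF.
have [P P_pd <-] := pw_attained (un F) V.
have un_GH : {in VG & VH, forall x y, un F x y /\ un F y x}.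
  by move=> x y xG yH; rewrite /un F_GH ?orbT.
have D_dpd : is_dpd F V (trace_through P VG h ++ trace_through P VH g).
  apply: dpd_cat => //; apply/pd_dpd/(pd_trace_through P_pd).
  - exact: subsetUl.
  - exact/subsetP/hH/subsetUr.
  - by move=> a aG; case: (un_GH a h).
  - exact: subsetUr.
  - exact/subsetP/gG/subsetUl.
  - by move=> a aH; case: (un_GH g a).
apply: leq_ltn_trans (dpw_le_width D_dpd) _.
have [_ D_cover _ _] := D_dpd; have [i i_lt gi] := D_cover g (subsetP (subsetUl _ _) g gG).
apply: (width_lt i_lt gi) => X; rewrite mem_cat => /orP[] /trace_through_card; apply.
- by rewrite (disjointFl dGH hH).
- by rewrite (disjointFr dGH gG).
Qed.
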